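(* Let $(X,\rho)$ be a metric space, $(A_k)\subset CL(X)$ and $A\in CL(X)$. Then the following statements are equivalent: (i) $(A_k)$ is Wijsman convergent to $A$; (ii) $(A_k)$ is $f$-Wijsman statistically convergent to $A$ for every unbounded modulus $f$; (iii) $(A_k)$ is $f$-Wijsman statistically convergent to $A$ for every unbounded, concave and slowly varying modulus $f$.
   Context: A modulus is a function $f\colon[0,\infty)\to[0,\infty)$ such that $f(x)=0$ iff $x=0$, $f$ is subadditive, increasing and continuous. A modulus $f$ is slowly varying if $\lim_{x\to\infty}\frac{f(ax)}{f(x)}=1$ for every $a>0$. $CL(X)$ denotes the set of all non-empty closed subsets of $(X,\rho)$, and $d(x,B)=\inf_{y\in B}\rho(x,y)$. $(A_k)$ is Wijsman convergent to $A$ if $d(x,A_k)\to d(x,A)$ for every $x\in X$. For an unbounded modulus $f$ and $K\subseteq\mathbb N$, the $f$-density is $d^f(K)=\lim_{n\to\infty}\frac{f(|\{k\le n:k\in K\}|)}{f(n)}$ (when the limit exists). A real sequence $(x_k)$ is $f$-statistically convergent to $l$ if for every $\varepsilon>0$ the set $\{k:|x_k-l|\ge\varepsilon\}$ has $f$-density $0$. $(A_k)$ is $f$-Wijsman statistically convergent to $A$ if for every $x\in X$ the sequence $(d(x,A_k))$ is $f$-statistically convergent to $d(x,A)$. *)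

From Stdlib Require Import Reals Lra ClassicalEpsilon.
From Coquelicot Require Import Coquelicot.
Open Scope R_scope.

Definition is_metric {X : Type} (rho : X -> X -> R) : Prop :=
  (forall x y, 0 <= rho x y) /\
  (forall x y, rho x y = 0 <-> x = y) /\
  (forall x y, rho x y = rho y x) /\
  (forall x y z, rho x z <= rho x y + rho y z).

Definition closed_in {X : Type} (rho : X -> X -> R) (B : X -> Prop) : Prop :=
  forall x, (forall eps, 0 < eps -> exists y, B y /\ rho x y < eps) -> B x.

Definition in_CL {X : Type} (rho : X -> X -> R) (B : X -> Prop) : Prop :=
  (exists y, B y) /\ closed_in rho B.

(* d(x,B) = inf_{y in B} rho(x,y)  (finite for non-empty B, as rho >= 0). *)
Definition dist_set {X : Type} (rho : X -> X -> R) (x : X) (B : X -> Prop) : R :=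
  real (Glb_Rbar (fun r => exists y, B y /\ r = rho x y)).

Definition wijsman_conv {X : Type} (rho : X -> X -> R)
  (A : nat -> X -> Prop) (A0 : X -> Prop) : Prop :=
  forall x, is_lim_seq (fun k => dist_set rho x (A k)) (dist_set rho x A0).

Definition is_modulus (f : R -> R) : Prop :=
  (forall x, 0 <= x -> 0 <= f x) /\
  (forall x, 0 <= x -> (f x = 0 <-> x = 0)) /\
  (forall x y, 0 <= x -> 0 <= y -> f (x + y) <= f x + f y) /\
  (forall x y, 0 <= x -> x <= y -> f x <= f y) /\
  (forall x, 0 <= x -> forall eps, 0 < eps -> exists delta, 0 < delta /\
     forall y, 0 <= y -> Rabs (y - x) < delta -> Rabs (f y - f x) < eps).

Definition unbounded_fun (f : R -> R) : Prop :=
  forall M, exists x, 0 <= x /\ M < f x.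

Definition concave_on_nonneg (f : R -> R) : Prop :=
  forall x y t, 0 <= x -> 0 <= y -> 0 <= t <= 1 ->
    t * f x + (1 - t) * f y <= f (t * x + (1 - t) * y).

Definition slowly_varying (f : R -> R) : Prop :=
  forall a, 0 < a -> is_lim (fun x => f (a * x) / f x) p_infty 1.

(* |{k <= n : k in K}|, indices k ranging over 1..n (N = {1,2,...}). *)
Definition ind (P : Prop) : nat :=
  if excluded_middle_informative P then 1%nat else 0%nat.

Fixpoint count_upto (K : nat -> Prop) (n : nat) : nat :=
  match n with
  | O => O
  | S m => (count_upto K m + ind (K (S m)))%nat
  end.

Definition f_density_zero (f : R -> R) (K : nat -> Prop) : Prop :=
  is_lim_seq (fun n => f (INR (count_upto K n)) / f (INR n)) 0.

Definition f_stat_conv (f : R -> R) (u : nat -> R) (l : R) : Prop :=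
  forall eps, 0 < eps -> f_density_zero f (fun k => Rabs (u k - l) >= eps).

Definition f_wijsman_stat_conv {X : Type} (rho : X -> X -> R) (f : R -> R)
  (A : nat -> X -> Prop) (A0 : X -> Prop) : Prop :=
  forall x, f_stat_conv f (fun k => dist_set rho x (A k)) (dist_set rho x A0).

(* For fixed x the statement only concerns the real sequence u_k = d(x, A_k) and
   its would-be limit l = d(x, A).

   If u_k -> l, each exceptional set {k : |u_k - l| >= eps} is finite, so its
   counting function is eventually constant while f(n) -> oo.

   Conversely, if u_k does not converge to l, some exceptional set K is
   infinite.  Let h(j) be an index by which K has j elements, and choose
   breakpoints t_0 = 0, t_(m+1) = t_m + g_m with g_m > (m+2) t_m + h(t_m).
   The piecewise-linear f with f(t_m) = m is the infimum of the lines through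
   consecutive breakpoints; it is concave because the gaps g_m increase.
   Since t_(m+1) >= (m+3) t_m we get f(bx) <= f(x) + 2 for large x, so f is
   slowly varying.  At n = h(t_m) <= t_(m+1) the set K has at least t_m
   elements up to n, so f(|K ∩ [1,n]|) / f(n) >= m / (m+1) does not tend to 0. *)

From Pilot Require Import Defs.
From Stdlib Require Import Reals Lra Lia Psatz Classical ClassicalEpsilon.
From Coquelicot Require Import Coquelicot.
Open Scope R_scope.

Lemma count_upto_le K n : (count_upto K n <= n)%nat.
Proof.
  induction n as [|n IH]; simpl; [lia|].
  unfold Defs.ind; destruct excluded_middle_informative; lia.
Qed.

Lemma count_upto_mono K m n : (m <= n)%nat -> (count_upto K m <= count_upto K n)%nat.
Proof. induction 1; simpl; lia. Qed.

Lemma count_upto_stable K N n :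
  (forall k, (N < k)%nat -> ~ K k) -> (N <= n)%nat -> count_upto K n = count_upto K N.
Proof.
  intros HK; induction 1 as [|n Hn IH]; simpl; [reflexivity|].
  unfold Defs.ind; destruct excluded_middle_informative as [Hk|]; [|lia].
  exfalso; apply (HK (S n)); [lia|exact Hk].
Qed.

Lemma count_upto_unbounded K :
  (forall N, exists k, (N <= k)%nat /\ K k) -> forall j, exists n, (j <= count_upto K n)%nat.
Proof.
  intros HK j; induction j as [|j [n Hn]]; [exists 0%nat; lia|].
  destruct (HK (S n)) as [[|k] [Hk HKk]]; [lia|].
  exists (S k); simpl; unfold Defs.ind.
  destruct excluded_middle_informative; [|contradiction].
  pose proof (count_upto_mono K n k ltac:(lia)); lia.
Qed.

Lemma f_density_zero_of_finite f K N :
  (forall x y, 0 <= x -> x <= y -> f x <= f y) -> unbounded_fun f ->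
  (forall k, (N < k)%nat -> ~ K k) -> f_density_zero f K.
Proof.
  intros f_mono f_unb HK. apply is_lim_seq_spec; intros eps.
  pose proof (cond_pos eps) as Heps.
  set (C := f (INR (count_upto K N))).
  destruct (f_unb (Rabs C / eps)) as [x0 [Hx0 Hfx0]].
  destruct (INR_unbounded x0) as [M HM].
  exists (N + M)%nat; intros n Hn.
  rewrite (count_upto_stable K N n HK) by lia; fold C.
  assert (Hfn : Rabs C / eps < f (INR n)).
  { eapply Rlt_le_trans; [exact Hfx0|].
    apply f_mono; [exact Hx0|]. apply Rle_trans with (INR M); [lra | apply le_INR; lia]. }
  assert (HCe : Rabs C < eps * f (INR n)).
  { apply Rmult_lt_compat_l with (r := eps) in Hfn; [|exact Heps].
    now replace (eps * (Rabs C / eps)) with (Rabs C) in Hfn by (field; lra). }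
  assert (Hpos : 0 < f (INR n)) by (pose proof (Rabs_pos C); nra).
  rewrite Rminus_0_r, Rabs_div, (Rabs_right (f _)) by lra.
  apply Rmult_lt_reg_r with (f (INR n)); [exact Hpos|].
  unfold Rdiv; rewrite Rmult_assoc, Rinv_l, Rmult_1_r by lra; lra.
Qed.

Lemma f_stat_conv_of_is_lim_seq f u (l : R) :
  is_modulus f -> unbounded_fun f -> is_lim_seq u l -> f_stat_conv f u l.
Proof.
  intros (_ & _ & _ & f_mono & _) f_unb Hu eps Heps.
  apply is_lim_seq_spec in Hu; simpl in Hu; destruct (Hu (mkposreal eps Heps)) as [N HN].
  apply (f_density_zero_of_finite f _ N f_mono f_unb).
  intros k Hk Hk'. specialize (HN k ltac:(lia)). simpl in HN. lra.
Qed.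

Definition inf_fun (l : nat -> R -> R) (x : R) : R :=
  real (Inf_seq (fun m => Finite (l m x))).

Section InfFun.

Variable l : nat -> R -> R.
Hypothesis l_nonneg : forall m x, 0 <= x -> 0 <= l m x.

Lemma inf_fun_spec x : 0 <= x ->
  (forall m, inf_fun l x <= l m x) /\
  (forall c, (forall m, c <= l m x) -> c <= inf_fun l x).
Proof.
  intros Hx. unfold inf_fun.
  pose proof (Inf_seq_correct (fun m => Finite (l m x))) as H.
  destruct (Inf_seq (fun m => Finite (l m x))) as [i| |]; simpl in *.
  - split.
    + intros m. apply Rnot_lt_le; intros Hlt.
      destruct (H (mkposreal (i - l m x) ltac:(lra))) as [H1 _].
      specialize (H1 m). simpl in H1. lra.
    + intros c Hc. apply Rnot_lt_le; intros Hlt.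
      destruct (H (mkposreal (c - i) ltac:(lra))) as [_ [n Hn]].
      specialize (Hc n). simpl in Hn. lra.
  - exfalso. specialize (H (l 0%nat x) 0%nat). simpl in H. lra.
  - exfalso. destruct (H 0) as [n Hn]. pose proof (l_nonneg n x Hx). lra.
Qed.

Lemma inf_fun_le m x : 0 <= x -> inf_fun l x <= l m x.
Proof. intros Hx; apply (inf_fun_spec x Hx). Qed.

Lemma inf_fun_ge c x : 0 <= x -> (forall m, c <= l m x) -> c <= inf_fun l x.
Proof. intros Hx; apply (inf_fun_spec x Hx). Qed.

Lemma inf_fun_concave :
  (forall m, concave_on_nonneg (l m)) -> concave_on_nonneg (inf_fun l).
Proof.
  intros Hl x y t Hx Hy Ht.
  apply inf_fun_ge; [nra|]; intros m.
  pose proof (inf_fun_le m x Hx); pose proof (inf_fun_le m y Hy).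
  pose proof (Hl m x y t Hx Hy Ht); nra.
Qed.

Lemma inf_fun_mono :
  (forall m x y, 0 <= x -> x <= y -> l m x <= l m y) ->
  forall x y, 0 <= x -> x <= y -> inf_fun l x <= inf_fun l y.
Proof.
  intros Hl x y Hx Hxy. apply inf_fun_ge; [lra|]; intros m.
  eapply Rle_trans; [apply inf_fun_le, Hx | apply Hl; assumption].
Qed.

Lemma inf_fun_lipschitz :
  (forall m x y, 0 <= x -> 0 <= y -> l m y <= l m x + Rabs (y - x)) ->
  forall x y, 0 <= x -> 0 <= y -> inf_fun l y <= inf_fun l x + Rabs (y - x).
Proof.
  intros Hl x y Hx Hy.
  enough (inf_fun l y - Rabs (y - x) <= inf_fun l x) by lra.
  apply inf_fun_ge; [exact Hx|]; intros m.
  pose proof (inf_fun_le m y Hy); pose proof (Hl m x y Hx Hy); lra.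
Qed.

End InfFun.

Lemma concave_subadditive f :
  concave_on_nonneg f -> f 0 = 0 ->
  forall x y, 0 <= x -> 0 <= y -> f (x + y) <= f x + f y.
Proof.
  intros Hf Hf0 x y Hx Hy.
  destruct (Req_dec (x + y) 0) as [E|E].
  { replace x with 0 by lra; replace y with 0 by lra. rewrite Rplus_0_r, Hf0; lra. }
  assert (Hs : forall z, 0 <= z <= x + y -> z / (x + y) * f (x + y) <= f z).
  { intros z Hz.
    assert (Ht : 0 <= z / (x + y) <= 1).
    { split; [apply Rdiv_le_0_compat; lra|].
      apply Rmult_le_reg_r with (x + y); [lra|].
      unfold Rdiv; rewrite Rmult_assoc, Rinv_l by lra; lra. }
    pose proof (Hf (x + y) 0 (z / (x + y)) ltac:(lra) ltac:(lra) Ht) as H.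
    replace (z / (x + y) * (x + y) + (1 - z / (x + y)) * 0) with z in H by (field; lra).
    rewrite Hf0 in H; lra. }
  pose proof (Hs x ltac:(lra)); pose proof (Hs y ltac:(lra)).
  assert (x / (x + y) * f (x + y) + y / (x + y) * f (x + y) = f (x + y)) by (field; lra).
  lra.
Qed.

Lemma is_modulus_of_concave f :
  f 0 = 0 -> (forall x, 0 < x -> 0 < f x) -> concave_on_nonneg f ->
  (forall x y, 0 <= x -> x <= y -> f x <= f y) ->
  (forall x y, 0 <= x -> 0 <= y -> f y <= f x + Rabs (y - x)) ->
  is_modulus f.
Proof.
  intros Hf0 Hpos Hconc Hmono Hlip.
  assert (Hnn : forall x, 0 <= x -> 0 <= f x) by (intros x Hx; rewrite <- Hf0; apply Hmono; lra).
  split; [exact Hnn|]; split; [|split; [|split; [exact Hmono|]]].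
  - intros x Hx; split; [|intros ->; exact Hf0].
    intros Hfx; destruct (Rle_lt_or_eq_dec 0 x Hx) as [Hlt|]; [|auto].
    pose proof (Hpos x Hlt); lra.
  - exact (concave_subadditive f Hconc Hf0).
  - intros x Hx eps Heps; exists eps; split; [exact Heps|]; intros y Hy Hyx.
    pose proof (Hlip x y Hx Hy); pose proof (Hlip y x Hy Hx) as Hxy.
    rewrite Rabs_minus_sym in Hxy. apply Rabs_def1; lra.
Qed.

Lemma ratio_near_one F G eps :
  0 < F -> Rabs (G - F) < eps * F -> Rabs (G / F - 1) < eps.
Proof.
  intros HF H. replace (G / F - 1) with ((G - F) / F) by (field; lra).
  rewrite Rabs_div, (Rabs_right F) by lra.
  apply Rmult_lt_reg_r with F; [exact HF|].
  unfold Rdiv; rewrite Rmult_assoc, Rinv_l, Rmult_1_r by lra; lra.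
Qed.

Lemma slowly_varying_of_dilation_bound f C :
  (forall x y, 0 <= x -> x <= y -> f x <= f y) ->
  (forall M, exists x0, forall x, x0 <= x -> M <= f x) ->
  (forall b, 1 <= b -> exists x0, 0 <= x0 /\ forall x, x0 <= x -> f (b * x) <= f x + C) ->
  slowly_varying f.
Proof.
  intros f_mono f_infty f_dil a Ha. apply is_lim_spec; intros eps; simpl.
  pose proof (cond_pos eps) as Heps.
  destruct (f_infty (Rabs C / eps + 1)) as [x1 Hx1].
  assert (Hbig : forall x, x1 <= x -> 0 < f x /\ Rabs C < eps * f x).
  { intros x Hx; specialize (Hx1 x Hx); pose proof (Rabs_pos C).
    assert (eps * (Rabs C / eps) = Rabs C) by (field; lra). split; nra. }
  pose proof (Rle_abs C).
  destruct (Rle_lt_dec 1 a) as [Ha1|Ha1].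
  - destruct (f_dil a Ha1) as [x0 [Hx0 Hdil]].
    exists (Rmax x0 x1); intros x Hx.
    pose proof (Rmax_l x0 x1); pose proof (Rmax_r x0 x1).
    destruct (Hbig x ltac:(lra)) as [Hpos Hlarge].
    pose proof (Hdil x ltac:(lra)).
    pose proof (f_mono x (a * x) ltac:(lra) ltac:(nra)).
    apply ratio_near_one; [exact Hpos|].
    rewrite Rabs_right; lra.
  - destruct (f_dil (/ a)) as [x0 [Hx0 Hdil]].
    { rewrite <- Rinv_1; apply Rinv_le_contravar; lra. }
    exists (Rmax x0 x1 / a); intros x Hx.
    pose proof (Rmax_l x0 x1); pose proof (Rmax_r x0 x1).
    assert (Hax : Rmax x0 x1 < a * x).
    { apply Rmult_lt_compat_l with (r := a) in Hx; [|lra].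
      now replace (a * (Rmax x0 x1 / a)) with (Rmax x0 x1) in Hx by (field; lra). }
    destruct (Hbig (a * x) ltac:(lra)) as [Hpos Hlarge].
    pose proof (Hdil (a * x) ltac:(lra)) as Hback.
    replace (/ a * (a * x)) with x in Hback by (field; lra).
    pose proof (f_mono (a * x) x ltac:(lra) ltac:(nra)).
    apply ratio_near_one; [lra|].
    rewrite Rabs_left1; nra.
Qed.

Section Breakpoints.

Variable h : nat -> nat.

Fixpoint breakpoint (m : nat) : nat :=
  match m with
  | O => O
  | S p => breakpoint p + S ((p + 2) * breakpoint p + h (breakpoint p))
  end.

Definition gap (m : nat) : nat := S ((m + 2) * breakpoint m + h (breakpoint m)).

Lemma breakpoint_S m : breakpoint (S m) = (breakpoint m + gap m)%nat.
Proof. reflexivity. Qed.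

Lemma gap_mono m n : (m <= n)%nat -> (gap m <= gap n)%nat.
Proof. induction 1 as [|n Hn IH]; [lia|]. unfold gap at 2; rewrite breakpoint_S; nia. Qed.

Lemma breakpoint_mono m n : (m <= n)%nat -> (breakpoint m <= breakpoint n)%nat.
Proof. induction 1; [lia|]. rewrite breakpoint_S; lia. Qed.

Lemma index_le_breakpoint m : (m <= breakpoint m)%nat.
Proof. induction m; [lia|]. rewrite breakpoint_S; unfold gap; lia. Qed.

Lemma breakpoint_growth m : ((m + 3) * breakpoint m <= breakpoint (S m))%nat.
Proof. rewrite breakpoint_S; unfold gap; nia. Qed.

Lemma h_breakpoint_le m : (h (breakpoint m) <= breakpoint (S m))%nat.
Proof. rewrite breakpoint_S; unfold gap; lia. Qed.

Lemma double_breakpoint_le_gap m : (2 * breakpoint m <= gap m)%nat.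
Proof. unfold gap; nia. Qed.

Lemma breakpoint_chord m n : (m <= n)%nat ->
  (breakpoint m + (n - m) * gap m <= breakpoint n <= breakpoint m + (n - m) * gap n)%nat.
Proof.
  induction 1 as [|n Hmn IH]; [lia|].
  rewrite breakpoint_S, Nat.sub_succ_l by exact Hmn.
  pose proof (gap_mono m n Hmn); pose proof (gap_mono n (S n) (Nat.le_succ_diag_r n)).
  nia.
Qed.

Lemma breakpoint_diff_le m n :
  INR (breakpoint m) - INR (breakpoint n) <= INR (gap m) * (INR m - INR n).
Proof.
  destruct (Nat.le_ge_cases n m) as [Hnm|Hmn].
  - pose proof (proj2 (breakpoint_chord n m Hnm)) as H.
    apply le_INR in H; rewrite plus_INR, mult_INR, minus_INR in H by exact Hnm. nra.
  - pose proof (proj1 (breakpoint_chord m n Hmn)) as H.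
    apply le_INR in H; rewrite plus_INR, mult_INR, minus_INR in H by exact Hmn. nra.
Qed.

Lemma breakpoint_bracket N x : INR (breakpoint N) <= x ->
  exists n, (N <= n)%nat /\ INR (breakpoint n) <= x <= INR (breakpoint (S n)).
Proof.
  destruct (INR_unbounded x) as [k Hk].
  assert (Hxk : x < INR (breakpoint (N + k))).
  { apply Rlt_le_trans with (INR k); [lra|]. apply le_INR.
    pose proof (index_le_breakpoint k); pose proof (breakpoint_mono k (N + k) ltac:(lia)); lia. }
  clear Hk; revert N Hxk; induction k as [|k IH]; intros N Hxk HN.
  - rewrite Nat.add_0_r in Hxk; lra.
  - destruct (Rle_lt_dec x (INR (breakpoint (S N)))) as [Hle|Hlt].
    + exists N; split; [lia | lra].
    + destruct (IH (S N)) as [n [Hn Hx]]; [now rewrite Nat.add_succ_comm | lra|].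
      exists n; split; [lia | exact Hx].
Qed.

Definition piece (m : nat) (x : R) : R :=
  INR m + (x - INR (breakpoint m)) / INR (gap m).

Lemma gap_ge1 m : 1 <= INR (gap m).
Proof. unfold gap; rewrite S_INR; pose proof (pos_INR ((m + 2) * breakpoint m + h (breakpoint m))); lra. Qed.

Lemma piece_ge n m x : INR (breakpoint n) <= x -> INR n <= piece m x.
Proof.
  intros Hx; unfold piece.
  pose proof (breakpoint_diff_le m n); pose proof (gap_ge1 m).
  set (q := (x - INR (breakpoint m)) / INR (gap m)).
  assert (q * INR (gap m) = x - INR (breakpoint m)) by (unfold q; field; lra).
  nra.
Qed.

Lemma piece_le n x : x <= INR (breakpoint (S n)) -> piece n x <= INR n + 1.
Proof.
  intros Hx; unfold piece; rewrite breakpoint_S, plus_INR in Hx; pose proof (gap_ge1 n).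
  set (q := (x - INR (breakpoint n)) / INR (gap n)).
  assert (q * INR (gap n) = x - INR (breakpoint n)) by (unfold q; field; lra).
  nra.
Qed.

Lemma piece_nonneg m x : 0 <= x -> 0 <= piece m x.
Proof. intros Hx; apply (piece_ge 0); simpl; lra. Qed.

Lemma piece_concave m : concave_on_nonneg (piece m).
Proof.
  intros x y t _ _ _; pose proof (gap_ge1 m).
  apply Req_le; unfold piece; field; lra.
Qed.

Lemma piece_mono m x y : x <= y -> piece m x <= piece m y.
Proof.
  intros Hxy; unfold piece, Rdiv; pose proof (gap_ge1 m).
  apply Rplus_le_compat_l, Rmult_le_compat_r; [apply Rlt_le, Rinv_0_lt_compat|]; lra.
Qed.

Lemma piece_lipschitz m x y : piece m y <= piece m x + Rabs (y - x).
Proof.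
  unfold piece; pose proof (gap_ge1 m).
  replace ((y - INR (breakpoint m)) / INR (gap m))
    with ((x - INR (breakpoint m)) / INR (gap m) + (y - x) / INR (gap m)) by (field; lra).
  enough ((y - x) / INR (gap m) <= Rabs (y - x)) by lra.
  apply Rle_trans with (Rabs (y - x) / INR (gap m)).
  - unfold Rdiv; apply Rmult_le_compat_r; [apply Rlt_le, Rinv_0_lt_compat; lra | apply Rle_abs].
  - pose proof (Rabs_pos (y - x)).
    apply Rmult_le_reg_r with (INR (gap m)); [lra|].
    unfold Rdiv; rewrite Rmult_assoc, Rinv_l by lra; nra.
Qed.

Definition slow_modulus : R -> R := inf_fun piece.

Lemma slow_modulus_le_piece m x : 0 <= x -> slow_modulus x <= piece m x.
Proof. exact (inf_fun_le piece piece_nonneg m x). Qed.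

Lemma slow_modulus_ge n x : INR (breakpoint n) <= x -> INR n <= slow_modulus x.
Proof.
  intros Hx. apply (inf_fun_ge piece piece_nonneg).
  - pose proof (pos_INR (breakpoint n)); lra.
  - intros m; exact (piece_ge n m x Hx).
Qed.

Lemma slow_modulus_le n x : 0 <= x -> x <= INR (breakpoint (S n)) -> slow_modulus x <= INR n + 1.
Proof. intros Hx Hxn; eapply Rle_trans; [apply (slow_modulus_le_piece n x Hx) | exact (piece_le n x Hxn)]. Qed.

Lemma slow_modulus_0 : slow_modulus 0 = 0.
Proof.
  apply Rle_antisym.
  - eapply Rle_trans; [apply (slow_modulus_le_piece 0); lra|]. unfold piece; simpl; unfold Rdiv; lra.
  - apply (slow_modulus_ge 0); simpl; lra.
Qed.

Lemma slow_modulus_pos x : 0 < x -> 0 < slow_modulus x.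
Proof.
  intros Hx. apply Rlt_le_trans with (Rmin (x / INR (gap 0)) (1 / 2)).
  { pose proof (gap_ge1 0). apply Rmin_glb_lt; [apply Rdiv_lt_0_compat|]; lra. }
  apply (inf_fun_ge piece piece_nonneg); [lra|]; intros [|m].
  - eapply Rle_trans; [apply Rmin_l|]. unfold piece; simpl; lra.
  - eapply Rle_trans; [apply Rmin_r|]. unfold piece.
    pose proof (gap_ge1 (S m)); pose proof (pos_INR m).
    pose proof (double_breakpoint_le_gap (S m)) as Hg.
    apply le_INR in Hg; rewrite mult_INR in Hg; simpl (INR 2) in Hg.
    rewrite S_INR.
    set (q := (x - INR (breakpoint (S m))) / INR (gap (S m))).
    assert (q * INR (gap (S m)) = x - INR (breakpoint (S m))) by (unfold q; field; lra).
    nra.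
Qed.

Lemma slow_modulus_concave : concave_on_nonneg slow_modulus.
Proof. exact (inf_fun_concave piece piece_nonneg piece_concave). Qed.

Lemma slow_modulus_mono x y : 0 <= x -> x <= y -> slow_modulus x <= slow_modulus y.
Proof. apply inf_fun_mono; [exact piece_nonneg | intros m x' y' _; apply piece_mono]. Qed.

Lemma slow_modulus_is_modulus : is_modulus slow_modulus.
Proof.
  apply is_modulus_of_concave.
  - exact slow_modulus_0.
  - exact slow_modulus_pos.
  - exact slow_modulus_concave.
  - exact slow_modulus_mono.
  - apply inf_fun_lipschitz; [exact piece_nonneg | intros m x y _ _; apply piece_lipschitz].
Qed.

Lemma slow_modulus_unbounded : unbounded_fun slow_modulus.
Proof.
  intros M. destruct (INR_unbounded M) as [n Hn].
  exists (INR (breakpoint n)); split; [apply pos_INR|].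
  pose proof (slow_modulus_ge n _ (Rle_refl _)); lra.
Qed.

Lemma slow_modulus_dilation b n x :
  1 <= b <= INR n -> INR (breakpoint n) <= x -> slow_modulus (b * x) <= slow_modulus x + 2.
Proof.
  intros Hb Hx. destruct (breakpoint_bracket n x Hx) as [n' [Hn' [Hlo Hhi]]].
  pose proof (slow_modulus_ge n' x Hlo).
  pose proof (pos_INR (breakpoint n')); pose proof (pos_INR (breakpoint (S n'))).
  assert (Hbx : b * x <= INR (breakpoint (S (S n')))).
  { pose proof (breakpoint_growth (S n')) as G. apply le_INR in G.
    rewrite mult_INR, plus_INR, S_INR in G. apply le_INR in Hn'.
    simpl (INR 3) in G. nra. }
  pose proof (slow_modulus_le (S n') (b * x) ltac:(nra) Hbx).
  rewrite S_INR in *; lra.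
Qed.

Lemma slow_modulus_slowly_varying : slowly_varying slow_modulus.
Proof.
  apply (slowly_varying_of_dilation_bound _ 2).
  - exact slow_modulus_mono.
  - intros M. destruct (INR_unbounded M) as [n Hn].
    exists (INR (breakpoint n)); intros x Hx. pose proof (slow_modulus_ge n x Hx); lra.
  - intros b Hb. destruct (INR_unbounded b) as [n Hn].
    exists (INR (breakpoint n)); split; [apply pos_INR|].
    intros x Hx; apply (slow_modulus_dilation b n x); [lra | exact Hx].
Qed.

Lemma slow_modulus_not_density_zero K :
  (forall j, (j <= count_upto K (h j))%nat) -> ~ f_density_zero slow_modulus K.
Proof.
  intros Hh Hzero. apply is_lim_seq_spec in Hzero; simpl in Hzero.
  destruct (Hzero (mkposreal (1 / 2) ltac:(lra))) as [N HN]; simpl in HN.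
  set (m := S N); set (n := h (breakpoint m)).
  pose proof (Hh (breakpoint m)) as Hcount; fold n in Hcount.
  pose proof (h_breakpoint_le m) as Hn; fold n in Hn.
  pose proof (index_le_breakpoint m); pose proof (count_upto_le K n).
  pose proof (slow_modulus_ge m (INR (count_upto K n)) ltac:(apply le_INR; lia)) as Hnum.
  pose proof (slow_modulus_le m (INR n) (pos_INR n) ltac:(apply le_INR; lia)) as Hden.
  pose proof (slow_modulus_pos (INR n) ltac:(apply lt_0_INR; unfold m in *; lia)) as Hpos.
  specialize (HN n ltac:(unfold m in *; lia)). rewrite Rminus_0_r in HN.
  assert (Hm : 1 <= INR m) by (unfold m; rewrite S_INR; pose proof (pos_INR N); lra).
  set (G := slow_modulus (INR (count_upto K n))) in *; set (F := slow_modulus (INR n)) in *.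
  assert (G / F < 1 / 2) by (eapply Rle_lt_trans; [apply Rle_abs | exact HN]).
  assert (G / F * F = G) by (field; lra).
  nra.
Qed.

End Breakpoints.

Lemma exists_modulus_not_density_zero K :
  (forall N, exists k, (N <= k)%nat /\ K k) ->
  exists f, is_modulus f /\ unbounded_fun f /\ concave_on_nonneg f /\
    slowly_varying f /\ ~ f_density_zero f K.
Proof.
  intros HK. pose proof (count_upto_unbounded K HK) as Hc.
  set (h := fun j => proj1_sig (constructive_indefinite_description _ (Hc j))).
  exists (slow_modulus h); split; [|split; [|split; [|split]]].
  - apply slow_modulus_is_modulus.
  - apply slow_modulus_unbounded.
  - apply slow_modulus_concave.
  - apply slow_modulus_slowly_varying.
  - apply slow_modulus_not_density_zero; intros j.
    exact (proj2_sig (constructive_indefinite_description _ (Hc j))).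
Qed.

Lemma is_lim_seq_of_f_stat_conv u (l : R) :
  (forall f, is_modulus f -> unbounded_fun f -> concave_on_nonneg f ->
     slowly_varying f -> f_stat_conv f u l) ->
  is_lim_seq u l.
Proof.
  intros Hstat. apply is_lim_seq_spec; intros eps; apply NNPP; intros Hnot.
  assert (HK : forall N, exists k, (N <= k)%nat /\ Rabs (u k - l) >= eps).
  { intros N; apply NNPP; intros HN; apply Hnot; exists N; intros k Hk.
    apply Rnot_ge_lt; intros Hk'; apply HN; exists k; auto. }
  destruct (exists_modulus_not_density_zero _ HK) as (f & Hmod & Hunb & Hconc & Hslow & Hdens).
  exact (Hdens (Hstat f Hmod Hunb Hconc Hslow eps (cond_pos eps))).
Qed.

Theorem theorem2p7 (X : Type) (rho : X -> X -> R) (Hrho : is_metric rho)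
  (A : nat -> X -> Prop) (A0 : X -> Prop)
  (HA : forall k, in_CL rho (A k)) (HA0 : in_CL rho A0) :
  (wijsman_conv rho A A0 <->
     (forall f, is_modulus f -> unbounded_fun f ->
        f_wijsman_stat_conv rho f A A0)) /\
  ((forall f, is_modulus f -> unbounded_fun f ->
        f_wijsman_stat_conv rho f A A0) <->
     (forall f, is_modulus f -> unbounded_fun f -> concave_on_nonneg f ->
        slowly_varying f -> f_wijsman_stat_conv rho f A A0)).
Proof.
  assert (i_ii : wijsman_conv rho A A0 ->
            forall f, is_modulus f -> unbounded_fun f -> f_wijsman_stat_conv rho f A A0).
  { intros Hw f Hf Hu x; exact (f_stat_conv_of_is_lim_seq f _ _ Hf Hu (Hw x)). }
  assert (iii_i : (forall f, is_modulus f -> unbounded_fun f -> concave_on_nonneg f ->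
                     slowly_varying f -> f_wijsman_stat_conv rho f A A0) ->
                  wijsman_conv rho A A0).
  { intros H x; apply is_lim_seq_of_f_stat_conv; intros f Hf Hu Hc Hs; exact (H f Hf Hu Hc Hs x). }
  split; split.
  - exact i_ii.
  - intros H; apply iii_i; intros f Hf Hu _ _; exact (H f Hf Hu).
  - intros H f Hf Hu _ _; exact (H f Hf Hu).
  - intros H; apply i_ii, iii_i, H.
Qed.
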